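(* Let $\rho:\mathbb R_+\to\mathbb R_+$ be concave with $\rho(0)=0$, $\rho(x)>0$ for $x>0$, $\rho'$ continuous on $(0,\infty)$ with values in $\mathbb R_+$, $\lim_{x\to0^+}\rho(x)/x=+\infty$, and $\int_0^\varepsilon\frac{1}{\rho(x)}\mathrm dx<\infty$ for some $\varepsilon>0$. Let $c\in\mathbb R_+$ be a constant, $\rho_c(x):=\rho(x)+c$, and $H_c(u):=\int_0^u\frac{1}{c+\rho(x)}\mathrm dx$ for $u\in\mathbb R_+$. Then $H_c$ is well-defined and strictly increasing on $\mathbb R_+$, $H_c(0)=0$ and $\lim_{u\to+\infty}H_c(u)=+\infty$. Moreover, denoting by $H_c^{-1}:\mathbb R_+\to\mathbb R_+$ the inverse function of $H_c$, for every $k_1\ge H_c(1)$ and $k_2,k_3>0$, $$H_c^{-1}(k_1+k_2)\le 2e^{k_2(\rho(1)+c)}H_c^{-1}(k_1)$$ and $$\rho_c\big(k_3H_c^{-1}(k_1+k_2)\big)\le 2e^{k_2(\rho(1)+c)}\rho_c\big(k_3H_c^{-1}(k_1)\big).$$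
   Context: $\mathbb R_+=[0,\infty)$. *)

From HB Require Import structures.
From mathcomp Require Import all_boot all_order all_algebra.
From mathcomp Require Import all_classical all_reals all_analysis.
Set Implicit Arguments. Unset Strict Implicit. Unset Printing Implicit Defensive.
Import Order.TTheory GRing.Theory Num.Theory.
Import numFieldNormedType.Exports.
Local Open Scope classical_set_scope.
Local Open Scope ring_scope.

(* H_c(u) := \int_0^u 1/(c + rho x) dx  (Lebesgue integral, extended-real valued;
   the point x = 0 is negligible, so the convention 0^-1 = 0 is irrelevant). *)
Definition Hc (R : realType) (rho : R -> R) (c u : R) : \bar R :=
  (\int[@lebesgue_measure R]_(x in [set x : R | (0 <= x <= u)%R]) ((c + rho x)^-1)%:E)%E.

Definition concave_on_Rplus (R : realType) (rho : R -> R) : Prop :=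
  forall x y t : R, 0 <= x -> 0 <= y -> 0 <= t <= 1 ->
    t * rho x + (1 - t) * rho y <= rho (t * x + (1 - t) * y).

(** Since [rho] is concave and nonnegative on R_+, it is nondecreasing and satisfies
    [rho (l y) <= l rho y] for [l >= 1]; in particular [c + rho x <= (rho 1 + c) x] for
    [x >= 1].  Hence [H_c v - H_c u >= (ln v - ln u) / (rho 1 + c)] for [1 <= u <= v],
    which yields [H_c u -> +oo] and, for [u = H_c^-1 k1] and [v = H_c^-1 (k1 + k2)],
    the bound [v <= e^(k2 (rho 1 + c)) u].  The estimate on [rho_c] then follows from
    monotonicity and subhomogeneity of [rho] applied to [k3 v <= e^(k2 (rho 1 + c)) k3 u].
    Finiteness of [H_c] comes from [1/(c + rho) <= 1/rho] near [0]. *)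
From HB Require Import structures.
From mathcomp Require Import all_boot all_order all_algebra.
From mathcomp Require Import all_classical all_reals all_analysis.
From mathcomp Require Import ring lra measurable_realfun.
Import Order.TTheory GRing.Theory Num.Theory.
Import numFieldNormedType.Exports.
Local Open Scope classical_set_scope.
Local Open Scope ring_scope.

Section concave_on_Rplus_theory.
Context {R : realType} {f : R -> R}.
Hypotheses (f_concave : concave_on_Rplus f) (f_ge0 : forall x, 0 <= x -> 0 <= f x).

(* If [f y < f x] with [x < y], write [y = t z + (1 - t) x] for a far point [z]:
   concavity and [f z >= 0] give [f y >= (1 - t) f x], which exceeds [f y] for small [t]. *)
Lemma concave_ge0_nondecreasing x y : 0 <= x -> x <= y -> f x <= f y.
Proof.
move=> x0 xy; rewrite leNgt; apply/negP => fyx.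
have fx0 : 0 < f x by apply: le_lt_trans fyx; apply: f_ge0; lra.
have fy0 : 0 <= f y by apply: f_ge0; lra.
have {}xy : x < y by rewrite lt_neqAle xy andbT; apply: contraTneq fyx => ->; lra.
pose t := (f x - f y) / (2 * f x).
have t0 : 0 < t by rewrite divr_gt0 //; lra.
have t01 : 0 <= t <= 1 by rewrite ltW //= ler_pdivrMr; lra.
pose z := (y - (1 - t) * x) / t.
have z0 : 0 <= z by rewrite divr_ge0 //; nra.
have := f_concave z x t z0 x0 t01.
have -> : t * z + (1 - t) * x = y by rewrite /z; field; lra.
have tfx : t * f x = (f x - f y) / 2 by rewrite /t; field; lra.
have := f_ge0 z z0; nra.
Qed.

Lemma concave_ge0_scale_le l y : 1 <= l -> 0 <= y -> f (l * y) <= l * f y.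
Proof.
move=> l1 y0; have l0 : 0 < l by lra.
have l01 : 0 <= l^-1 <= 1 by rewrite invr_ge0 invf_le1 ?(ltW l0).
have := f_concave (l * y) 0 l^-1 (mulr_ge0 (ltW l0) y0) (lexx 0) l01.
rewrite mulr0 addr0 mulrA mulVf ?mul1r; last lra.
rewrite -ler_pdivrMl // mulrC.
have : 0 <= (1 - l^-1) * f 0 by rewrite mulr_ge0 ?f_ge0 // subr_ge0 invf_le1.
lra.
Qed.

Lemma concave_ge0_addr_le_scale c E x y : 0 <= c -> 1 <= E -> 0 <= x -> 0 <= y ->
  x <= E * y -> f x + c <= E * (f y + c).
Proof.
move=> c0 E1 x0 y0 xEy.
have : f x <= f (E * y) by apply: concave_ge0_nondecreasing.
have : f (E * y) <= E * f y by apply: concave_ge0_scale_le.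
have : c <= E * c by rewrite ler_peMl.
lra.
Qed.

End concave_on_Rplus_theory.

Lemma measurable_EFin_inv_pos (R : realType) (g : R -> R) :
  (forall x, 0 < x -> 0 < g x) -> (forall x, 0 < x -> {for x, continuous g}) ->
  measurable_fun (`]0, +oo[%classic : set R) (fun x => ((g x)^-1)%:E).
Proof.
move=> g_gt0 g_cont; apply/measurable_EFinP.
apply: open_continuous_measurable_fun; first exact: interval_open.
move=> x; rewrite inE /= in_itv /= andbT => x0.
have : {for x, continuous (fun x => (g x)^-1)}.
  by apply: continuousV; [rewrite gt_eqF ?g_gt0 | exact: g_cont].
exact.
Qed.

Lemma measurable_EFin_inv (R : realType) :
  measurable_fun (`]0, +oo[%classic : set R) (fun x => (x^-1)%:E).
Proof. by apply: (@measurable_EFin_inv_pos _ id) => // x _; exact: cvg_id. Qed.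

Lemma integral_inv_itv (R : realType) (a b : R) : 0 < a -> a <= b ->
  (\int[lebesgue_measure]_(x in `]a, b]%classic) (x^-1)%:E = (ln b - ln a)%:E)%E.
Proof.
move=> a0; rewrite le_eqVlt => /predU1P[<-|ab].
  by rewrite set_itvoc0 integral_set0 subrr.
have inv_cont x : 0 < x -> {for x, continuous (@GRing.inv R)}.
  by move=> x0; apply: inv_continuous; rewrite gt_eqF.
have ln_cont x : 0 < x -> {for x, continuous (@ln R)}.
  move=> x0; have [dln _] := is_derive1_ln x0.
  exact/differentiable_continuous/derivable1_diffP.
rewrite integral_itv_obnd_cbnd; last first.
  apply: (measurable_funS _ _ (measurable_EFin_inv R)) => //.
  by move=> x /= /[!in_itv] /= /andP[ax _]; lra.
apply: (continuous_FTC2 ab).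
- apply: continuous_in_subspaceT => x /[!inE] /= /[!in_itv] /= /andP[ax _].
  by apply: inv_cont; lra.
- split.
  + by move=> x /[!in_itv] /= /andP[ax _]; have [] := is_derive1_ln (lt_trans a0 ax).
  + by apply: cvg_at_right_filter; apply: ln_cont.
  + by apply: cvg_at_left_filter; apply: ln_cont; lra.
- move=> x /[!in_itv] /= /andP[ax _].
  by have := is_derive1_ln (lt_trans a0 ax); rewrite derive1E => ?; rewrite derive_val.
Qed.

Lemma integral_cst_itv (R : realType) (a b k : R) : a <= b ->
  (\int[lebesgue_measure]_(x in `]a, b]%classic) (cst k%:E) x = (k * (b - a))%:E)%E.
Proof.
move=> ab; rewrite integral_cst //= lebesgue_measure_itv /= lte_fin.
case: ltP => [_|ba]; first by rewrite -EFinD -EFinM.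
have -> : b = a by lra.
by rewrite subrr mulr0 mule0.
Qed.

Lemma EFin_ln_div_cvgy (R : realType) (K : R) : 0 < K ->
  (ln u / K)%:E @[u --> +oo] --> +oo%E.
Proof.
move=> K0; apply/cvgeyPge => A; near=> u.
rewrite lee_fin ler_pdivlMr // -ler_expR lnK ?posrE.
  by near: u; apply: nbhs_pinfty_ge; exact: num_real.
by near: u; apply: nbhs_pinfty_gt; exact: num_real.
Unshelve. all: end_near.
Qed.

Section Hc_theory.
Context {R : realType} {rho : R -> R} {c : R}.
Hypotheses (rho_concave : concave_on_Rplus rho)
  (rho_ge0 : forall x, 0 <= x -> 0 <= rho x)
  (rho_gt0 : forall x, 0 < x -> 0 < rho x)
  (rho_cont : forall x, 0 < x -> {for x, continuous rho})
  (c_ge0 : 0 <= c).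

Local Notation mu := (@lebesgue_measure R).

Let rhoc_gt0 x : 0 < x -> 0 < c + rho x.
Proof. by move=> x0; rewrite ltr_wpDl // rho_gt0. Qed.

Let rhoc_cont x : 0 < x -> {for x, continuous (fun x => c + rho x)}.
Proof. by move=> x0; apply: continuousD; [exact: cst_continuous | exact: rho_cont]. Qed.

Let rhoc_inv_ge0 (D : set R) : D `<=` `[0, +oo[%classic ->
  forall x, D x -> (0 <= ((c + rho x)^-1)%:E)%E.
Proof.
move=> DS x /DS /= /[!in_itv] /= /andP[x0 _].
by rewrite lee_fin invr_ge0 addr_ge0 // rho_ge0.
Qed.

Let itv_oc_subset (a b : R) : 0 <= a -> `]a, b]%classic `<=` `[0, +oo[%classic.
Proof. by move=> a0 x /= /[!in_itv] /= /andP[ax _]; lra. Qed.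

Lemma measurable_rhoc_inv (D : set R) : measurable D -> D `<=` `[0, +oo[%classic ->
  measurable_fun D (fun x => ((c + rho x)^-1)%:E : \bar R).
Proof.
move=> mD DS; apply: (measurable_funS (measurable_itv `[0, +oo[) DS).
have -> : `[0, +oo[%classic = [set 0] `|` `]0, +oo[%classic :> set R.
  apply/seteqP; split => x /= /[!in_itv] /=; rewrite ?andbT.
    by rewrite le_eqVlt => /predU1P[<-|->]; [left|right].
  by move=> [->|/ltW].
apply/measurable_funU => //; split; first exact: measurable_fun_set1.
exact: (@measurable_EFin_inv_pos _ (fun x => c + rho x)).
Qed.

Lemma HcE u :
  Hc rho c u = (\int[mu]_(x in `[0%R, u]%classic) ((c + rho x)^-1)%:E)%E.
Proof. by []. Qed.

Lemma Hc0 : Hc rho c 0 = 0%E.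
Proof. by rewrite HcE set_itv1 integral_set1. Qed.

Lemma Hc_ge0 u : (0 <= Hc rho c u)%E.
Proof.
apply: integral_ge0; apply: rhoc_inv_ge0.
by move=> x /= /[!in_itv] /= /andP[x0 _]; rewrite x0.
Qed.

Lemma HcD {a b : R} : 0 <= a -> a <= b ->
  Hc rho c b = (Hc rho c a + \int[mu]_(x in `]a, b]%classic) ((c + rho x)^-1)%:E)%E.
Proof.
move=> a0 ab; have sub0b : `[0, b]%classic `<=` `[0, +oo[%classic.
  by move=> x /= /[!in_itv] /= /andP[x0 _]; rewrite x0.
have splitE : `[0, b]%classic = `[0, a]%classic `|` `]a, b]%classic :> set R.
  by rewrite -(@itv_bndbnd_setU _ _ _ (BRight a)) //= bnd_simp.
rewrite !HcE splitE ge0_integral_setU //; rewrite -?splitE.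
- exact: measurable_rhoc_inv.
- exact: rhoc_inv_ge0.
- by apply/disj_setPS => x [] /= /[!in_itv] /= /andP[_ xa] /andP[ax _]; lra.
Qed.

Lemma integral_rhoc_inv_ge {a b : R} : 0 <= a -> a < b ->
  (((b - a) / (c + rho b))%:E <= \int[mu]_(x in `]a, b]%classic) ((c + rho x)^-1)%:E)%E.
Proof.
move=> a0 ab; have b0 : 0 < b by lra.
rewrite mulrC -integral_cst_itv; last exact: ltW.
apply: ge0_le_integral => //.
- by move=> x _; rewrite lee_fin invr_ge0 ltW ?rhoc_gt0.
- by apply: measurable_rhoc_inv => //; exact: itv_oc_subset.
- move=> x /= /[!in_itv] /= /andP[ax xb].
  rewrite lee_fin lef_pV2 ?posrE ?rhoc_gt0 ?lerD2l //; last lra.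
  by apply: concave_ge0_nondecreasing => //; lra.
Qed.

Lemma integral_rhoc_inv_lt_pinfty {a b : R} : 0 < a -> a <= b ->
  (\int[mu]_(x in `]a, b]%classic) ((c + rho x)^-1)%:E < +oo)%E.
Proof.
move=> a0 ab; apply: (@le_lt_trans _ _ ((c + rho a)^-1 * (b - a))%:E); last exact: ltry.
rewrite -integral_cst_itv //.
apply: ge0_le_integral => //.
- by apply: rhoc_inv_ge0; exact: itv_oc_subset (ltW a0).
- by apply: measurable_rhoc_inv => //; exact: itv_oc_subset (ltW a0).
- move=> x /= /[!in_itv] /= /andP[ax xb].
  rewrite lee_fin lef_pV2 ?posrE ?rhoc_gt0 ?lerD2l //; try lra.
  by apply: concave_ge0_nondecreasing => //; lra.
Qed.

Lemma integral_rhoc_inv_ge_ln {a b : R} : 1 <= a -> a <= b ->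
  (((ln b - ln a) / (rho 1 + c))%:E <=
    \int[mu]_(x in `]a, b]%classic) ((c + rho x)^-1)%:E)%E.
Proof.
move=> a1 ab; have a0 : 0 < a by lra.
have K0 : 0 < rho 1 + c by rewrite addrC rhoc_gt0.
have sub_pos : `]a, b]%classic `<=` `]0, +oo[%classic.
  by move=> x /= /[!in_itv] /= /andP[ax _]; lra.
have inv_ge0 x : `]a, b]%classic x -> (0 <= (x^-1)%:E)%E.
  by move=> /sub_pos /= /[!in_itv] /= /andP[x0 _]; rewrite lee_fin invr_ge0 ltW.
have m_inv := measurable_funS (measurable_itv _) sub_pos (measurable_EFin_inv R).
rewrite mulrC EFinM -integral_inv_itv // -ge0_integralZl_EFin ?invr_ge0 ?(ltW K0) //.
apply: ge0_le_integral => //.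
- by move=> x /inv_ge0; apply: mule_ge0; rewrite lee_fin invr_ge0 ltW.
- exact: (measurable_funeM _ m_inv).
- by apply: measurable_rhoc_inv => //; exact: itv_oc_subset (ltW a0).
- move=> x /= /[!in_itv] /= /andP[ax xb]; have x0 : 0 < x by lra.
  rewrite -EFinM lee_fin -invfM lef_pV2 ?posrE ?rhoc_gt0 ?mulr_gt0 //.
  rewrite addrC mulrC; apply: concave_ge0_addr_le_scale => //; lra.
Qed.

Hypothesis rho_inv_integrable : exists2 eps : R, 0 < eps &
  (\int[mu]_(x in [set x : R | (0 < x <= eps)%R]) ((rho x)^-1)%:E < +oo)%E.

Let Hc_le {u v : R} : 0 <= u -> u <= v -> (Hc rho c u <= Hc rho c v)%E.
Proof.
move=> u0 uv; rewrite (HcD u0 uv) leeDl //.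
by apply: integral_ge0; apply: rhoc_inv_ge0; exact: itv_oc_subset.
Qed.

Lemma Hc_lt_pinfty u : 0 <= u -> (Hc rho c u < +oo)%E.
Proof.
move=> u0; have [eps eps0 rho_inv_fin] := rho_inv_integrable.
have Hc_eps : (Hc rho c eps < +oo)%E.
  rewrite (HcD (lexx 0) (ltW eps0)) Hc0 add0e; apply: le_lt_trans rho_inv_fin.
  have sub_pos : `]0, eps]%classic `<=` `]0, +oo[%classic.
    by move=> x /= /[!in_itv] /= /andP[x0 _]; rewrite x0.
  apply: (@ge0_le_integral _ _ _ mu `]0, eps]%classic) => //.
  - by apply: rhoc_inv_ge0; exact: itv_oc_subset.
  - by apply: measurable_rhoc_inv => //; exact: itv_oc_subset.
  - exact: (measurable_funS _ sub_pos (@measurable_EFin_inv_pos _ rho rho_gt0 rho_cont)).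
  - move=> x /= /[!in_itv] /= /andP[x0 _].
    by rewrite lee_fin lef_pV2 ?posrE ?rhoc_gt0 ?rho_gt0 // lerDr.
have [ueps|epsu] := leP u eps; first exact: le_lt_trans (Hc_le u0 ueps) Hc_eps.
rewrite (HcD (ltW eps0) (ltW epsu)) lte_add_pinfty //.
exact: integral_rhoc_inv_lt_pinfty (ltW epsu).
Qed.

Lemma Hc_lt u v : 0 <= u -> u < v -> (Hc rho c u < Hc rho c v)%E.
Proof.
move=> u0 uv; rewrite (HcD u0 (ltW uv)) lteDl ?ge0_fin_numE ?Hc_ge0 ?Hc_lt_pinfty //.
apply: lt_le_trans (integral_rhoc_inv_ge u0 uv).
by rewrite lte_fin divr_gt0 ?subr_gt0 ?rhoc_gt0 //; lra.
Qed.

Lemma le_Hc u v : 0 <= u -> 0 <= v -> (Hc rho c u <= Hc rho c v)%E = (u <= v).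
Proof.
move=> u0 v0; apply/idP/idP => [|uv]; last exact: Hc_le.
by apply: contraTT; rewrite -!ltNge => vu; exact: Hc_lt.
Qed.

Lemma Hc_ge_ln u : 1 <= u -> ((ln u / (rho 1 + c))%:E <= Hc rho c u)%E.
Proof.
move=> u1; have := integral_rhoc_inv_ge_ln (lexx 1) u1.
rewrite ln1 subr0 => /le_trans; apply.
by rewrite (HcD ler01 u1) leeDr ?Hc_ge0.
Qed.

Lemma Hc_cvgy : Hc rho c u @[u --> +oo] --> +oo%E.
Proof.
have K0 : 0 < rho 1 + c by rewrite addrC rhoc_gt0.
apply: (@gee_cvgy _ _ _ _ (fun u => (ln u / (rho 1 + c))%:E)); last exact: EFin_ln_div_cvgy.
near=> u; apply: Hc_ge_ln.
by near: u; apply: nbhs_pinfty_ge; exact: num_real.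
Unshelve. all: end_near.
Qed.

Lemma Hc_growth_le u v k : 1 <= u -> u <= v -> (Hc rho c v <= Hc rho c u + k%:E)%E ->
  v <= expR (k * (rho 1 + c)) * u.
Proof.
move=> u1 uv Hvu; have K0 : 0 < rho 1 + c by rewrite addrC rhoc_gt0.
have Hu_fin : Hc rho c u \is a fin_num by rewrite ge0_fin_numE ?Hc_ge0 ?Hc_lt_pinfty //; lra.
have : (ln v - ln u) / (rho 1 + c) <= k.
  rewrite -lee_fin -(leeD2lE _ _ Hu_fin); apply: le_trans Hvu.
  by rewrite (HcD _ uv) ?leeD2l ?integral_rhoc_inv_ge_ln //; lra.
rewrite ler_pdivrMr // => ln_le.
rewrite -[v]lnK ?posrE; last lra.
by rewrite -[u in _ * u]lnK ?posrE -?expRD ?ler_expR; lra.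
Qed.

End Hc_theory.

Theorem lemma2p2 (R : realType) (rho : R -> R) (c : R) :
  concave_on_Rplus rho ->
  rho 0 = 0 ->
  (forall x, 0 <= x -> 0 <= rho x) ->
  (forall x, 0 < x -> 0 < rho x) ->
  (forall x, 0 < x -> derivable rho x 1) ->
  (forall x, 0 < x -> {for x, continuous (derive1 rho)}) ->
  (forall x, 0 < x -> 0 <= (derive1 rho) x) ->
  (rho x / x) @[x --> 0^'+] --> +oo ->
  (exists2 eps : R, 0 < eps &
     (\int[@lebesgue_measure R]_(x in [set x : R | (0 < x <= eps)%R]) ((rho x)^-1)%:E < +oo)%E) ->
  0 <= c ->
  (forall u, 0 <= u -> (Hc rho c u < +oo)%E) /\
  (forall u v, 0 <= u -> u < v -> (Hc rho c u < Hc rho c v)%E) /\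
  Hc rho c 0 = 0%E /\
  Hc rho c u @[u --> +oo] --> +oo%E /\
  (forall Hinv : R -> R,
     (forall k, 0 <= k -> 0 <= Hinv k /\ Hc rho c (Hinv k) = k%:E) ->
     forall k1 k2 k3 : R, (Hc rho c 1 <= k1%:E)%E -> 0 < k2 -> 0 < k3 ->
       Hinv (k1 + k2) <= 2 * expR (k2 * (rho 1 + c)) * Hinv k1 /\
       rho (k3 * Hinv (k1 + k2)) + c
         <= 2 * expR (k2 * (rho 1 + c)) * (rho (k3 * Hinv k1) + c)).
Proof.
move=> rho_concave _ rho_ge0 rho_gt0 rho_der _ _ _ rho_inv_integrable c_ge0.
have rho_cont x : 0 < x -> {for x, continuous rho}.
  by move=> x0; apply/differentiable_continuous/derivable1_diffP/rho_der.
split; first exact: Hc_lt_pinfty.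
split; first exact: Hc_lt.
split; first exact: Hc0.
split; first exact: Hc_cvgy.
move=> Hinv HinvK k1 k2 k3 Hc1_le k2_gt0 k3_gt0.
have k1_ge0 : 0 <= k1 by rewrite -lee_fin (le_trans _ Hc1_le) ?Hc_ge0.
have [u_ge0 Hu] := HinvK k1 k1_ge0.
have [v_ge0 Hv] := HinvK (k1 + k2) (addr_ge0 k1_ge0 (ltW k2_gt0)).
have K_gt0 : 0 < rho 1 + c by have := rho_gt0 1 ltr01; lra.
set E := expR (k2 * (rho 1 + c)).
have E_ge1 : 1 <= E.
  by apply: le_trans (expR_ge1Dx _); rewrite lerDl mulr_ge0 // ltW.
have u_ge1 : 1 <= Hinv k1 by rewrite -(le_Hc (rho := rho) (c := c)) ?Hu //; apply: ler01.
have u_le_v : Hinv k1 <= Hinv (k1 + k2).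
  by rewrite -(le_Hc (rho := rho) (c := c)) ?Hu ?Hv // lee_fin lerDl ltW.
have v_le_Eu : Hinv (k1 + k2) <= E * Hinv k1.
  by apply: Hc_growth_le; rewrite ?Hu ?Hv ?EFinD.
have k3v_le : k3 * Hinv (k1 + k2) <= 2 * E * (k3 * Hinv k1) by nra.
split; first by nra.
by apply: concave_ge0_addr_le_scale; rewrite ?mulr_ge0 ?(ltW k3_gt0) //; lra.
Qed.
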